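(* Let $A$ be a finite set. The action of $\Sigma_A$ on $\vec P(Y^A)_{\mathbf0}^{\mathbf1}$ is free.
   Context: A precubical set ($\square$-set) $K$ is a sequence of pairwise disjoint sets $(K[n])_{n\ge0}$ with face maps $d^\varepsilon_i:K[n]\to K[n-1]$ ($1\le i\le n$, $\varepsilon\in\{0,1\}$) satisfying $d^\varepsilon_i d^\eta_j=d^\eta_{j-1}d^\varepsilon_i$ for $i<j$; bi-pointed $\square$-sets have chosen vertices $\mathbf0,\mathbf1\in K[0]$. Geometric realization: $|K|=\coprod_n K[n]\times[0,1]^n/\sim$ with $(d^\varepsilon_i c,\mathbf x)\sim(c,\delta^\varepsilon_i\mathbf x)$, $\delta^\varepsilon_i$ inserting $\varepsilon$ as $i$-th coordinate; $[c;\mathbf x]$ is the class. A path $\alpha:[0,1]\to|K|$ is a d-path if there are $0=t_0<\dots<t_m=1$, $c_k\in K[n_k]$ and continuous $\beta_k:[t_{k-1},t_k]\to[0,1]^{n_k}$ with non-decreasing coordinates such that $\alpha(t)=[c_k;\beta_k(t)]$ on $[t_{k-1},t_k]$. $\vec P(K)_{\mathbf0}^{\mathbf1}$ is the space of d-paths from $\mathbf0$ to $\mathbf1$. $Y^A$ is the bi-pointed $\square$-set where $Y^A[k]$ is the set of pairs $(c,<)$ with $c:A\to\{0,*,1\}$, $|c^{-1}( * )|=k$, and $<$ a strict total order on $c^{-1}( * )$; if $c^{-1}( * )=\{a_1<\dots<a_k\}$ then $d^\varepsilon_i(c,<)=(c',<')$ where $c'(a_i)=\varepsilon$, $c'=c$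 elsewhere, and $<'$ is the restriction of $<$ to $c^{-1}( * )\setminus\{a_i\}$; $\mathbf0=(\text{const}_0,\emptyset)$, $\mathbf1=(\text{const}_1,\emptyset)$. $\Sigma_A$ acts on $Y^A$ from the right by $(c,<)\sigma=(c\circ\sigma,<\sigma)$ with $a\,(<\sigma)\,b$ iff $\sigma(a)<\sigma(b)$, inducing an action $(\alpha\sigma)(t)=\alpha(t)\sigma$ on $\vec P(Y^A)_{\mathbf0}^{\mathbf1}$, where $[c;\mathbf x]\sigma=[c\sigma;\mathbf x]$. *)

From HB Require Import structures.
From Stdlib Require Import Relations.
From mathcomp Require Import all_boot all_order all_algebra all_fingroup.
From mathcomp Require Import all_classical all_reals all_analysis.
Set Implicit Arguments. Unset Strict Implicit. Unset Printing Implicit Defensive.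
Import Order.TTheory GRing.Theory Num.Theory numFieldNormedType.Exports.

(* Geometric realization of a (pre)cubical set given by its cell sets   *)
(* cell n = K[n] and face maps face n i e = d^e_{i+1} : K[n+1] -> K[n]   *)
(* (face indices are 0-based: i : 'I_n.+1 stands for the paper's i+1).  *)
Section Realization.
Variable R : realType.
Variable cell : nat -> Type.
Variable face : forall n, 'I_n.+1 -> bool -> cell n.+1 -> cell n.

(* representatives (c, x) of points [c; x] of |K| *)
Definition rpt := {n : nat & (cell n * ('I_n -> R))%type}.

(* delta^e_i : [0,1]^n -> [0,1]^(n+1), inserting e as (i+1)-th coordinate *)
Definition coins n (i : 'I_n.+1) (e : bool) (x : 'I_n -> R) : 'I_n.+1 -> R :=
  fun j => match unlift i j with None => ((e : nat)%:R)%R | Some j' => x j' end.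

Inductive rstep : rpt -> rpt -> Prop :=
  RStep n (i : 'I_n.+1) (e : bool) (c : cell n.+1) (x : 'I_n -> R) :
    rstep (existT _ n (face i e c, x)) (existT _ n.+1 (c, coins i e x)).

(* the equivalence relation generated: two representatives give the same
   point of |K| *)
Definition requiv : rpt -> rpt -> Prop := clos_refl_sym_trans rpt rstep.

Local Open Scope ring_scope.
Local Open Scope classical_set_scope.

Definition is_dpath (alpha : R -> rpt) (p0 p1 : rpt) : Prop :=
  exists (m : nat) (t : nat -> R)
         (piece : nat -> {n : nat & (cell n * (R -> 'I_n -> R))%type}),
    [/\ (0 < m)%N, t 0%N = 0, t m = 1 &
        forall k, (k < m)%N -> t k < t k.+1]
    /\ (forall k, (k < m)%N ->
         match piece k with existT n (c, b) =>
           [/\ (forall j : 'I_n, {within `[t k, t k.+1]%classic, continuous ((fun u : R => b u j) : R -> R)}),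
               (forall (j : 'I_n) u v, t k <= u -> u <= v -> v <= t k.+1 -> b u j <= b v j),
               (forall (j : 'I_n) u, t k <= u <= t k.+1 -> 0 <= b u j <= 1) &
               (forall u, t k <= u <= t k.+1 -> requiv (alpha u) (existT _ n (c, b u)))]
         end)
    /\ requiv (alpha 0) p0 /\ requiv (alpha 1) p1.

End Realization.

(* A cell (c, <) is encoded as (c, s) where c : A -> {0,*,1} is encoded *)
(* by option bool (Some false = 0, None = star, Some true = 1) and s is the *)
(* duplicate-free list of c^{-1}(star) listed in <-increasing order.        *)
Section YA.
Variable A : finType.

Definition ycell_ok (k : nat) (p : {ffun A -> option bool} * seq A) : bool :=
  [&& uniq p.2, size p.2 == k & [forall a, (p.1 a == None) == (a \in p.2)]].

Definition ycell (k : nat) := {p : {ffun A -> option bool} * seq A | ycell_ok k p}.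

(* d^e_{i+1}: set the (i+1)-th starred element a_{i+1} to e, drop it from the order *)
Definition yface_raw (i : nat) (e : bool) (p : {ffun A -> option bool} * seq A) :=
  ([ffun a => if (a \in p.2) && (index a p.2 == i) then Some e else p.1 a],
   [seq a <- p.2 | index a p.2 != i]).

Lemma count_index_eq (T : eqType) (s : seq T) i :
  uniq s -> (i < size s)%N -> count (fun a => index a s == i) s = 1%N.
Proof.
case: s => [//|x0 s'] us lt; set s := x0 :: s' in us lt *.
have -> : count (fun a => index a s == i) s = count (pred1 i) (map (index^~ s) s).
  by rewrite count_map.
have -> : map (index^~ s) s = iota 0 (size s).
  apply: (@eq_from_nth _ 0%N); first by rewrite size_map size_iota.
  move=> j; rewrite size_map => lj.
  by rewrite (nth_map x0) // nth_iota // add0n index_uniq.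
by rewrite count_uniq_mem ?iota_uniq // mem_iota lt.
Qed.

Lemma yface_ok n (i : 'I_n.+1) e (c : ycell n.+1) : ycell_ok n (yface_raw i e (val c)).
Proof.
case: c => [[f s] /= /and3P [us /eqP ss /forallP H]].
rewrite /ycell_ok /=; apply/and3P; split.
- exact: filter_uniq.
- have := count_predC (fun a => index a s == i) s.
  rewrite count_index_eq ?ss //= add1n => -[E].
  by rewrite size_filter E.
- apply/forallP => a; rewrite ffunE mem_filter.
  have := H a; case: (boolP (a \in s)) => as_ /=.
  + by case: (f a) => [b|] //= _; case: (index a s == i).
  + by rewrite andbF; apply.
Qed.

Definition yface n (i : 'I_n.+1) (e : bool) (c : ycell n.+1) : ycell n :=
  exist (ycell_ok n) _ (yface_ok i e c).

(* right action: (c, <) sigma = (c o sigma, <sigma), a <sigma b iff sigma a < sigma b *)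
Definition yact_raw (s : {perm A}) (p : {ffun A -> option bool} * seq A) :=
  ([ffun a => p.1 (s a)], map (s^-1)%g p.2).

Lemma yact_ok n (s : {perm A}) (c : ycell n) : ycell_ok n (yact_raw s (val c)).
Proof.
case: c => [[f l] /= /and3P [ul /eqP sl /forallP H]].
rewrite /ycell_ok /=; apply/and3P; split.
- by rewrite map_inj_uniq //; apply: perm_inj.
- by rewrite size_map sl.
- apply/forallP => a; rewrite ffunE.
  by rewrite -[a in a \in _](permK s a) (mem_map (@perm_inj _ s^-1%g)).
Qed.

Definition yact n (s : {perm A}) (c : ycell n) : ycell n := exist (ycell_ok n) _ (yact_ok s c).

Lemma yvert_ok (b : bool) : ycell_ok 0 ([ffun _ => Some b], [::]).
Proof. by rewrite /ycell_ok /=; apply/forallP => a; rewrite ffunE. Qed.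

Definition yvert (b : bool) : ycell 0 := exist (ycell_ok 0) _ (yvert_ok b).

Variable R : realType.

Definition ypt (b : bool) : rpt R ycell := existT _ 0%N (yvert b, fun _ => 0%R).

Definition ypt_act (s : {perm A}) (p : rpt R ycell) : rpt R ycell :=
  existT _ (projT1 p) (yact s (projT2 p).1, (projT2 p).2).

End YA.

(** A point of |Y^A| has well-defined coordinates in [0,1]^A, and the list,
    ordered by <, of those a whose coordinate lies strictly between 0 and 1
    is well defined too: both are invariant under the identifications of the
    realization. Along a d-path from 0 to 1 every coordinate passes through
    1/2 (intermediate value theorem on each piece), so every a occurs in that
    list at some time u. If the path is fixed by sigma, the list at time u
    equals its image under sigma^-1, and a list equal to its image under a
    map consists of fixed points of that map; hence sigma a = a. *)

From HB Require Import structures.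
From Stdlib Require Import Relations.
From mathcomp Require Import all_boot all_order all_algebra all_fingroup.
From mathcomp Require Import all_classical all_reals all_analysis.
Set Implicit Arguments. Unset Strict Implicit. Unset Printing Implicit Defensive.
Import Order.TTheory GRing.Theory Num.Theory numFieldNormedType.Exports.
Local Open Scope ring_scope.

Lemma map_eq_id_in (T : eqType) (f : T -> T) (s : seq T) :
  map f s = s -> {in s, f =1 id}.
Proof.
elim: s => [//|x s IHs] [fx /IHs fs] y.
by rewrite in_cons => /predU1P [->|/fs].
Qed.

Lemma index_filter_index_neq (T : eqType) (s : seq T) (i : nat) (x : T) :
  uniq s -> x \in s -> index x s != i ->
  index x [seq y <- s | index y s != i] = unbump i (index x s).
Proof.
elim: s i => [//|y s IHs] i /= /andP [ys us] xs.
have -> : [seq z <- s | (if y == z then 0 else (index z s).+1) != i] =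
          [seq z <- s | (index z s).+1 != i].
  apply: eq_in_filter => z zs.
  by have /negPf -> : y != z by apply: contraTneq zs => <-.
rewrite eqxx; case: (eqVneq y x) xs => [<- _ i_neq0|yx].
  by rewrite i_neq0 /= eqxx.
rewrite in_cons eq_sym (negPf yx) /= => xs.
case: i => [_|i ne_xi].
  by rewrite /= (all_filterP (allT _ _)) // /unbump subn1.
by rewrite /= (negPf yx) IHs // unbumpS.
Qed.

Lemma clos_rst_invariant (T U : Type) (r : relation T) (F : T -> U) :
  (forall x y, r x y -> F x = F y) ->
  forall x y, clos_refl_sym_trans T r x y -> F x = F y.
Proof. by move=> Fr x y; elim=> [? ? /Fr | | ? ? _ -> | ? ? ? _ -> _ ->]. Qed.

Section PiecewiseIVT.
Variable R : realType.
Local Open Scope classical_set_scope.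

Lemma piecewise_IVT (g : R -> R) (t : nat -> R) (m : nat) (y : R) :
  (forall k, (k < m)%N -> t k <= t k.+1) ->
  (forall k, (k < m)%N -> exists2 f : R -> R,
     {within `[t k, t k.+1]%classic, continuous f} & {in `[t k, t k.+1]%R, g =1 f}) ->
  g (t 0) <= y <= g (t m) -> exists2 u, t 0 <= u <= t m & g u = y.
Proof.
elim: m => [|m IHm] t_step pieces /andP [gy yg].
  by exists (t 0%N); rewrite ?lexx //; apply/le_anti/andP.
have t0_le k : (k <= m.+1)%N -> t 0 <= t k.
  elim: k => // k IHk km; exact: le_trans (IHk (ltnW km)) (t_step k km).
have [ygm|gmy] := leP y (g (t m)).
  have [|u /andP [u0 um] gu] := IHm (fun k km => t_step k (ltnW km))
    (fun k km => pieces k (ltnW km)); first by rewrite gy.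
  by exists u; rewrite // u0 (le_trans um (t_step m _)).
have [f fc gf] := pieces m (ltnSn m).
have tm_in : t m \in `[t m, t m.+1]%R by rewrite in_itv /= lexx t_step.
have tm1_in : t m.+1 \in `[t m, t m.+1]%R by rewrite in_itv /= lexx t_step.
have [|u u_in fu] := @IVT _ f _ _ y (t_step m (ltnSn m)) fc.
  by rewrite ge_min le_max -gf // -gf // (ltW gmy) yg orbT.
move: (u_in); rewrite in_itv /= => /andP [mu um1].
by exists u; [rewrite um1 (le_trans (t0_le m (leqnSn m)) mu) | rewrite gf].
Qed.

End PiecewiseIVT.

Section Invariants.
Variable A : finType.
Variable R : realType.
Local Open Scope classical_set_scope.

Local Notation ypoint := (rpt R (ycell A)).

Definition coord_at n (x : 'I_n -> R) (k : nat) : R :=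
  if insub k is Some j then x j else 0.

Lemma coord_at_coins n (i : 'I_n.+1) (e : bool) (x : 'I_n -> R) (k : nat) :
  (k < n.+1)%N ->
  coord_at (coins i e x) k = if k == i then e%:R else coord_at x (unbump i k).
Proof.
move=> kn; have -> : k = Ordinal kn by [].
rewrite /coord_at valK /coins; case: unliftP => [j|] ->; last by rewrite eqxx.
have /negPf -> : lift i j != i :> nat by rewrite eq_sym; exact: neq_lift.
by rewrite bumpK valK.
Qed.

Definition ystar (p : ypoint) : seq A := (val (projT2 p).1).2.

Definition ycoord (p : ypoint) (a : A) : R :=
  match (val (projT2 p).1).1 a with
  | Some e => e%:R
  | None => coord_at (projT2 p).2 (index a (ystar p))
  end.

Definition yinterior (p : ypoint) : seq A :=
  [seq a <- ystar p | 0 < ycoord p a < 1].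

Lemma mem_yinterior (p : ypoint) (a : A) :
  (a \in yinterior p) = (0 < ycoord p a < 1).
Proof.
case: p => n [[[f l] ok] x]; have /and3P [_ _ /forallP fl] := ok.
rewrite mem_filter /ycoord /ystar /=.
have := fl a; case: (f a) => [e|] /= /eqP al; rewrite -{}al ?andbT //.
by rewrite andbF; case: e; rewrite ?ltxx ?andbF.
Qed.

Lemma ycoord_ypt (b : bool) (a : A) : ycoord (ypt A R b) a = b%:R.
Proof. by rewrite /ycoord /= ffunE. Qed.

Lemma ycoord_rstep (p q : ypoint) : rstep (@yface A) p q -> ycoord p = ycoord q.
Proof.
case=> n i e [[f l] ok] x; have /and3P [/= ul /eqP /= sl /forallP /= fl] := ok.
apply/funext => a; rewrite /ycoord /ystar /= ffunE.
have := fl a; case: (boolP (a \in l)) => al /=; last by case: (f a).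
case: (f a) => // _; rewrite coord_at_coins -?sl ?index_mem //.
by case: eqP => [//|/eqP ne_ai]; rewrite index_filter_index_neq.
Qed.

Lemma yinterior_rstep (p q : ypoint) :
  rstep (@yface A) p q -> yinterior p = yinterior q.
Proof.
move=> pq; rewrite /yinterior (ycoord_rstep pq).
case: pq => n i e [[f l] ok] x; have /and3P [/= _ /eqP /= sl /forallP /= fl] := ok.
rewrite /ystar /= -filter_predI; apply: eq_in_filter => a al /=.
have := fl a; rewrite al /ycoord /ystar /=; case: (f a) => // _.
rewrite coord_at_coins -?sl ?index_mem //.
by case: eqP => _ /=; rewrite ?andbT ?andbF //; case: e; rewrite ?ltxx ?andbF.
Qed.

Lemma ycoord_requiv (p q : ypoint) : requiv (@yface A) p q -> ycoord p = ycoord q.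
Proof. exact/clos_rst_invariant/ycoord_rstep. Qed.

Lemma yinterior_requiv (p q : ypoint) :
  requiv (@yface A) p q -> yinterior p = yinterior q.
Proof. exact/clos_rst_invariant/yinterior_rstep. Qed.

Lemma ycoord_act (s : {perm A}) (p : ypoint) (a : A) :
  ycoord (ypt_act s p) a = ycoord p (s a).
Proof.
case: p => n [c x]; rewrite /ycoord /ystar /= ffunE.
by rewrite -[X in index X _](permK s) index_map //; apply: perm_inj.
Qed.

Lemma yinterior_act (s : {perm A}) (p : ypoint) :
  yinterior (ypt_act s p) = map (s^-1)%g (yinterior p).
Proof.
rewrite /yinterior filter_map; congr map; apply: eq_filter => a /=.
by rewrite ycoord_act permKV.
Qed.

Lemma ycoord_continuous n (c : ycell A n) (b : R -> 'I_n -> R) (D : set R) (a : A) :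
  (forall j, {within D, continuous (fun u => b u j)}) ->
  {within D, continuous (fun u => ycoord (existT _ n (c, b u)) a)}.
Proof.
move=> bc; rewrite /ycoord /coord_at /=.
have cst_within (r : R) : {within D, continuous (fun _ : R => r)}.
  by apply: continuous_subspaceT; exact: cst_continuous.
by case: ((val c).1 a) => [e|] //; rewrite /ystar /=; case: insub.
Qed.

Lemma dpath_yinterior (alpha : R -> ypoint) :
  is_dpath (@yface A) alpha (ypt A R false) (ypt A R true) ->
  forall a, exists2 u, 0 <= u <= 1 & a \in yinterior (alpha u).
Proof.
move=> [m [t [piece [[_ t0 tm t_lt] [pieces [alpha0 alpha1]]]]]] a.
have [u] : exists2 u, t 0 <= u <= t m & ycoord (alpha u) a = 1 / 2.
  apply: piecewise_IVT.
  - by move=> k km; exact/ltW/t_lt.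
  - move=> k km; have := pieces k km; case: (piece k) => n [c b] [bc _ _ alpha_cb].
    exists (fun u => ycoord (existT _ n (c, b u)) a); first exact: ycoord_continuous.
    by move=> u; rewrite in_itv /= => /alpha_cb /ycoord_requiv ->.
  - rewrite t0 tm (ycoord_requiv alpha0) (ycoord_requiv alpha1) !ycoord_ypt.
    by rewrite divr_ge0 ?ler0n //= ler_pdivrMr // mul1r ler1n.
rewrite t0 tm => u01 yu; exists u => //; rewrite mem_yinterior yu.
by rewrite divr_gt0 ?ltr0n //= ltr_pdivrMr // mul1r ltr1n.
Qed.

End Invariants.

Theorem proposition3p2 (A : finType) (R : realType) (alpha : R -> rpt R (ycell A))
  (s : {perm A}) :
  is_dpath (@yface A) alpha (ypt A R false) (ypt A R true) ->
  (forall u : R, 0 <= u <= 1 -> requiv (@yface A) (ypt_act s (alpha u)) (alpha u)) ->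
  s = 1%g.
Proof.
move=> dpath fixed; apply/permP => a; rewrite perm1.
have [u u01 a_in] := dpath_yinterior dpath a.
have := yinterior_requiv (fixed u u01); rewrite yinterior_act => /map_eq_id_in.
by move=> /(_ a a_in) /= sa; rewrite -{1}sa permKV.
Qed.
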